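(* Let $0<\alpha<\varepsilon<1$ be constants, let $c=(1+\varepsilon)n$ and $\frac{\log n}{n}\le p\le\frac{2\log n}{n}$. Then with probability $1-o(1)$ the graph $G\sim\mathcal G_c(n,p)$ has the following property: for every $\mathcal C^*\subseteq[c]$ with $|\mathcal C^*|\ge(1+\alpha)n$, the graph $G[[n];\mathcal C^*]$ is $k$-rainbow-pseudorandom for $k=\frac{n}{\log^{0.49}n}$.
   Context: $\mathcal G_c(n,p)$: random graph on $[n]$, each pair an edge independently with probability $p$, each edge colored uniformly and independently from $[c]$. $G[[n];\mathcal C^*]$ is the spanning subgraph of $G$ consisting of the edges with color in $\mathcal C^*$. An edge-colored graph on $n$ vertices is $k$-rainbow-pseudorandom if for every two disjoint vertex sets $A,B$ with $|A|=|B|=k$, the number of distinct colors on the edges between $A$ and $B$ is at least $n$. Asymptotics as $n\to\infty$. *)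

From HB Require Import structures.
From mathcomp Require Import all_boot all_order all_algebra.
From mathcomp Require Import all_classical all_reals all_analysis.
Set Implicit Arguments. Unset Strict Implicit. Unset Printing Implicit Defensive.
Import Order.TTheory GRing.Theory Num.Theory.
Local Open Scope ring_scope.

(* unordered pairs {i,j} of [n] = 'I_n, represented as (i,j) with i < j *)
Definition epair (n : nat) := {e : 'I_n * 'I_n | (e.1 < e.2)%N}.

(* an edge-colored graph on [n] with colors in [c] = 'I_c :
   each pair is either a non-edge (None) or an edge of color col (Some col) *)
Definition cgraph (n c : nat) := {ffun epair n -> option 'I_c}.

Definition ecol n c (G : cgraph n c) (a b : 'I_n) : option 'I_c :=
  match insub (a, b) : option (epair n) with
  | Some e => G e
  | None => match insub (b, a) : option (epair n) with
            | Some e => G e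
            | None => None
            end
  end.

(* probability of an outcome G under G_c(n,p): edges independent with
   probability p, each edge colour uniform in [c] *)
Definition Gnp_weight (R : realType) n c (p : R) (G : cgraph n c) : R :=
  \prod_(e : epair n) (match G e with None => 1 - p | Some _ => p / c%:R end).

Definition colors_between n c (G : cgraph n c) (Cs : {set 'I_c})
  (A B : {set 'I_n}) : {set 'I_c} :=
  [set col in Cs | [exists a in A, exists b in B, ecol G a b == Some col]].

Definition rainbow_pseudorandom n c (G : cgraph n c) (Cs : {set 'I_c}) (k : nat)
  : Prop :=
  forall A B : {set 'I_n}, [disjoint A & B] -> #|A| = k -> #|B| = k ->
    (n <= #|colors_between G Cs A B|)%N.

Definition lemma12_prop (R : realType) (alpha : R) n c (k : nat) (G : cgraph n c)
  : bool :=
  [forall Cs : {set 'I_c},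
     ((1 + alpha) * n%:R <= #|Cs|%:R) ==>
     `[< rainbow_pseudorandom G Cs k >]].

Definition prob_Gc (R : realType) n c (p : R) (P : pred (cgraph n c)) : R :=
  \sum_(G : cgraph n c | P G) Gnp_weight p G.

Definition ncolors (R : realType) (eps : R) (n : nat) : nat :=
  Num.truncn ((1 + eps) * n%:R).
Definition kpar (R : realType) (n : nat) : nat :=
  Num.truncn (n%:R / powR (ln (n%:R : R)) (49%:R / 100%:R)).

From HB Require Import structures.
From mathcomp Require Import all_boot all_order all_algebra.
From mathcomp Require Import all_classical all_reals all_analysis.
From mathcomp Require Import ring lra.
Import Order.TTheory GRing.Theory Num.Theory.
Import numFieldNormedType.Exports.
Set Implicit Arguments. Unset Strict Implicit. Unset Printing Implicit Defensive.
Local Open Scope ring_scope.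

(** Union bound over the triples (A, B, D) with A, B disjoint k-sets of
    vertices and D a set of at least alpha n colours: if G[[n]; Cs] is not
    k-rainbow-pseudorandom, witnessed by A and B, then the colours of Cs that
    do not appear between A and B form such a D, since fewer than n colours
    appear and |Cs| >= (1 + alpha) n.  For a fixed triple, the at least k^2
    pairs between A and B independently avoid the colours of D with
    probability 1 - p|D|/c <= exp(-p alpha n / c), so the probability of
    failure is at most 2^(2n+c) exp(-k^2 p alpha n / c).  With p n >= log n,
    c <= 2n and k ~ n / log^0.49 n, the exponent k^2 p alpha n / c is of order
    n log^0.02 n, which beats the e^(4n) bound on the number of triples. *)

Lemma card_finset (T : finType) : #|{: {set T}}| = (2 ^ #|T|)%N.
Proof.
have powT : powerset [set: T] = [set: {set T}].
  by apply/setP => A; rewrite powersetE finset.subsetT finset.in_setT.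
by rewrite -[LHS]cardsT -powT card_powerset cardsT.
Qed.

Section ColoredGraphs.
Variables n c : nat.

Definition cross_pairs (A B : {set 'I_n}) : {set epair n} :=
  [set e | ((val e).1 \in A) && ((val e).2 \in B) ||
           ((val e).1 \in B) && ((val e).2 \in A)].

Lemma card_cross_pairs (A B : {set 'I_n}) :
  [disjoint A & B] -> (#|A| * #|B| <= #|cross_pairs A B|)%N.
Proof.
move=> dAB.
pose orient (e : epair n) := if (val e).1 \in A then val e else ((val e).2, (val e).1).
rewrite -cardsX; apply: leq_trans (leq_imset_card orient (cross_pairs A B)).
apply: subset_leq_card; apply/fintype.subsetP => -[a b] /setXP [aA bB].
have bA : (b \in A) = false by apply: (disjointFl dAB).
case: (ltngtP a b) => [ab|ba|/val_inj ab]; last by move: bA; rewrite -ab aA.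
- apply/imsetP; exists (exist _ (a, b) ab : epair n); first by rewrite inE /= aA bB.
  by rewrite /orient /= aA.
- apply/imsetP; exists (exist _ (b, a) ba : epair n); first by rewrite inE /= aA bB orbT.
  by rewrite /orient /= bA.
Qed.

Lemma ecol_epair (G : cgraph n c) (e : epair n) : ecol G (val e).1 (val e).2 = G e.
Proof.
case: e => [[x y] xy]; rewrite /ecol /=.
case: insubP => [e _ He|] /=; last by rewrite xy.
by congr (G _); apply: val_inj.
Qed.

Lemma ecol_epair_sym (G : cgraph n c) (e : epair n) : ecol G (val e).2 (val e).1 = G e.
Proof.
case: e => [[x y] xy]; rewrite /ecol /=.
case: insubP => [e /= yx _|_]; first by move: yx; rewrite ltnNge ltnW.
case: insubP => [e _ He|] /=; last by rewrite xy.
by congr (G _); apply: val_inj.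
Qed.

Definition avoids (D : {set 'I_c}) (o : option 'I_c) : bool :=
  if o is Some col then col \notin D else true.

Lemma colors_between_avoids (G : cgraph n c) Cs A B e :
  e \in cross_pairs A B -> avoids (Cs :\: colors_between G Cs A B) (G e).
Proof.
rewrite inE => eAB; case Ge : (G e) => [col|] //=.
rewrite inE negb_and negbK inE orbC; case: (col \in Cs) => //=.
apply/existsP; case/orP: eAB => /andP [e1 e2].
  exists (val e).1; rewrite e1 /=; apply/existsP; exists (val e).2.
  by rewrite e2 ecol_epair Ge eqxx.
exists (val e).2; rewrite e2 /=; apply/existsP; exists (val e).1.
by rewrite e1 ecol_epair_sym Ge eqxx.
Qed.

Definition avoids_on (G : cgraph n c) (S : {set epair n}) (D : {set 'I_c}) : bool :=
  [forall e in S, avoids D (G e)].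

Definition failure_witness (R : realType) (alpha : R) (k : nat)
    (t : {set 'I_n} * {set 'I_n} * {set 'I_c}) : bool :=
  [&& [disjoint t.1.1 & t.1.2], #|t.1.1| == k, #|t.1.2| == k &
      alpha * n%:R <= #|t.2|%:R].

Lemma not_lemma12_prop_witness (R : realType) (alpha : R) (k : nat) (G : cgraph n c) :
  ~~ lemma12_prop alpha k G ->
  exists t, failure_witness alpha k t && avoids_on G (cross_pairs t.1.1 t.1.2) t.2.
Proof.
move/forallPn => [Cs]; rewrite negb_imply => /andP [CsP /asboolPn].
move/existsNP => [A /existsNP [B /not_implyP [dAB /not_implyP [kA /not_implyP [kB]]]]].
move/negP; rewrite -ltnNge => few.
set cb := colors_between G Cs A B.
have cbCs : cb \subset Cs by apply/fintype.subsetP => col; rewrite inE => /andP [].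
exists (A, B, Cs :\: cb); apply/andP; split; last first.
  by apply/forall_inP => e; exact: colors_between_avoids.
rewrite /failure_witness /= dAB kA kB !eqxx cardsDS // natrB ?subset_leq_card //.
have : (#|cb|%:R : R) <= n%:R by rewrite ler_nat ltnW.
by move: CsP; lra.
Qed.

End ColoredGraphs.

Lemma sumr_option (V : nmodType) (T : finType) (F : option T -> V) :
  \sum_o F o = F None + \sum_i F (Some i).
Proof.
rewrite (bigD1 None) //=; congr (_ + _).
rewrite (reindex_omap Some id) //=; last by case.
by apply: eq_bigl => i; rewrite eqxx.
Qed.

Section RandomColoredGraph.
Variables (R : realType) (n c : nat) (p : R).
Hypothesis c_gt0 : (0 < c)%N.

Definition edge_weight (o : option 'I_c) : R :=
  if o is Some _ then p / c%:R else 1 - p.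

Lemma sum_edge_weight_avoids (D : {set 'I_c}) :
  \sum_(o | avoids D o) edge_weight o = 1 - p * #|D|%:R / c%:R.
Proof.
rewrite big_mkcond sumr_option /= -big_mkcond sumr_const.
have leDc : (#|D| <= c)%N by rewrite -[X in (_ <= X)%N]card_ord max_card.
have cardCD : #|[pred i | i \notin D]| = (c - #|D|)%N.
  by apply/eqP; rewrite -(eqn_add2l #|D|) cardC card_ord subnKC.
rewrite cardCD -[_ *+ _]mulr_natr natrB //.
have : (c%:R : R) != 0 by rewrite pnatr_eq0 -lt0n.
by move=> c0; field.
Qed.

Lemma sum_Gnp_weight_avoids_on (S : {set epair n}) (D : {set 'I_c}) :
  \sum_(G : cgraph n c | avoids_on G S D) Gnp_weight p G
    = (1 - p * #|D|%:R / c%:R) ^+ #|S|.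
Proof.
have edge_sum e : \sum_(o | (e \in S) ==> avoids D o) edge_weight o
    = if e \in S then 1 - p * #|D|%:R / c%:R else 1.
  case: (e \in S); first exact: sum_edge_weight_avoids.
  have := sum_edge_weight_avoids finset.set0; rewrite cards0 mulr0 mul0r subr0 => <-.
  by apply: eq_bigl => -[col|]; rewrite //= inE.
rewrite -prodr_const [RHS]big_mkcond /=.
under [RHS]eq_bigr do rewrite -edge_sum.
by rewrite bigA_distr_big_dep; apply: eq_big.
Qed.

Lemma sum_Gnp_weight : \sum_(G : cgraph n c) Gnp_weight p G = 1.
Proof.
rewrite -(expr0 (1 - p * #|@finset.set0 'I_c|%:R / c%:R)) -(cards0 (epair n)).
rewrite -sum_Gnp_weight_avoids_on; apply: eq_bigl => G.
by apply/esym/forall_inP => e; rewrite inE.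
Qed.

Lemma prob_GcC (P : pred (cgraph n c)) :
  prob_Gc p P = 1 - \sum_(G : cgraph n c | ~~ P G) Gnp_weight p G.
Proof. by rewrite -sum_Gnp_weight (bigID P) /= addrK. Qed.

Lemma Gnp_weight_ge0 (G : cgraph n c) : 0 <= p <= 1 -> 0 <= Gnp_weight p G.
Proof.
move=> /andP [p0 p1]; apply: prodr_ge0 => e _.
by case: (G e) => [_|]; rewrite ?divr_ge0 ?subr_ge0.
Qed.

Lemma prob_cross_avoids_le (alpha : R) (k : nat) t :
  0 <= p <= 1 -> 0 <= alpha -> failure_witness alpha k t ->
  \sum_(G : cgraph n c | avoids_on G (cross_pairs t.1.1 t.1.2) t.2) Gnp_weight p G
    <= expR (- (p * alpha * n%:R / c%:R)) ^+ (k * k).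
Proof.
case: t => [[A B] D] /= /andP [p0 p1] alpha0 /and4P [/= dAB /eqP kA /eqP kB Dlarge].
rewrite sum_Gnp_weight_avoids_on.
set y := expR _.
have c_pos : (0 : R) < c%:R by rewrite ltr0n.
have Dc : (#|D|%:R : R) <= c%:R by rewrite ler_nat -[X in (_ <= X)%N]card_ord max_card.
have x0 : 0 <= 1 - p * #|D|%:R / c%:R.
  by rewrite subr_ge0 ler_pdivrMr // mul1r; nra.
have xy : 1 - p * #|D|%:R / c%:R <= y.
  apply: le_trans (expR_ge1Dx _); rewrite lerD2l lerN2 ler_pM2r ?invr_gt0 //.
  by rewrite -mulrA ler_wpM2l.
have y1 : y <= 1.
  by rewrite -expR0 ler_expR oppr_le0 divr_ge0 // !mulr_ge0.
apply: le_trans (lerXn2r _ _ _ xy) (ler_wiXn2l _ y1 _); rewrite ?nnegrE ?expR_ge0 //.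
by rewrite -[X in (X * _)%N]kA -kB card_cross_pairs.
Qed.

Lemma prob_not_lemma12_prop_le (alpha : R) (k : nat) : 0 <= p <= 1 -> 0 <= alpha ->
  \sum_(G : cgraph n c | ~~ lemma12_prop alpha k G) Gnp_weight p G
    <= (2 ^ (n + n + c))%:R * expR (- (p * alpha * n%:R / c%:R)) ^+ (k * k).
Proof.
move=> p01 alpha0; set bound := expR _ ^+ _.
have w0 G : 0 <= Gnp_weight p G := Gnp_weight_ge0 G p01.
pose bad (G : cgraph n c) (t : {set 'I_n} * {set 'I_n} * {set 'I_c}) :=
  failure_witness alpha k t && avoids_on G (cross_pairs t.1.1 t.1.2) t.2.
apply: (@le_trans _ _ (\sum_(G : cgraph n c) \sum_(t | bad G t) Gnp_weight p G)).
  rewrite [X in _ <= X](bigID (fun G => ~~ lemma12_prop alpha k G)) /=.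
  apply: ler_wpDr; first by apply: sumr_ge0 => G _; exact: sumr_ge0.
  apply: ler_sum => G /not_lemma12_prop_witness [t tbad].
  by rewrite (bigD1 t) //= lerDl sumr_ge0.
rewrite (exchange_big_dep (failure_witness alpha k)) => [|G t _ /andP []] //=.
apply: (@le_trans _ _ (\sum_(t | failure_witness alpha k t) bound)).
  by apply: ler_sum => t tP; rewrite /bad tP; exact: prob_cross_avoids_le.
rewrite sumr_const -[_ *+ _]mulr_natl ler_wpM2r ?exprn_ge0 ?expR_ge0 // ler_nat.
apply: leq_trans (max_card _) _.
by rewrite !card_prod !card_finset !card_ord -!expnD.
Qed.
End RandomColoredGraph.

(* The scales of the proof: [L] is log n, [q] = L^0.49, [r] = L^0.02 and [x] = n. *)
Lemma union_bound_exponent_ge (F : realFieldType) (alpha q r L p x k c : F) :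
  0 < alpha -> 0 < x -> 0 < c -> c <= 2 * x -> L = q * q * r -> 40 <= alpha * r ->
  x <= 2 * (q * k) -> L <= p * x -> 5 * x <= k * k * (p * alpha * x / c).
Proof.
move=> alpha0 x0 c0 cx Lqr alpha_r xqk Lpx.
rewrite mulrA ler_pdivlMr //.
have xx : x ^+ 2 <= 4 * (q * k) ^+ 2 by nra.
have alpha_L : 40 * (q * k) ^+ 2 <= alpha * (k * k) * L.
  rewrite Lqr -[X in _ <= X](_ : alpha * r * (q * k) ^+ 2 = _); last by ring.
  by rewrite ler_wpM2r ?sqr_ge0.
have : alpha * (k * k) * L <= alpha * (k * k) * (p * x).
  by apply: ler_wpM2l => //; nra.
nra.
Qed.

Local Open Scope classical_set_scope.

Section Asymptotics.
Variable R : realType.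

Lemma ln_le_half (x : R) : 8 <= x -> ln x <= x / 2.
Proof.
move=> x8.
have ln_le_predr (y : R) : 0 < y -> ln y <= y - 1.
  by move=> y0; have := @le_ln1Dx R (y - 1); rewrite addrCA subrr addr0; apply; lra.
rewrite -[x in ln x](_ : 4 * (x / 4) = x); last by field.
rewrite lnM ?posrE; [|lra|lra].
have := ln_le_predr 4; have := ln_le_predr (x / 4); lra.
Qed.

Lemma exp2_le_expR (m : nat) : (2 ^ m)%:R <= expR m%:R :> R.
Proof.
have e2 : (2 : R) <= expR 1 by have := expR_ge1Dx (1 : R); lra.
rewrite natrX -[m%:R]mulr1 expRM_natl.
by apply: lerXn2r; rewrite ?nnegrE ?expR_ge0.
Qed.

Lemma ncolors_gt0 (eps : R) (n : nat) : 0 < eps -> (0 < n)%N -> (0 < ncolors eps n)%N.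
Proof.
move=> eps0 n0; rewrite truncn_gt0.
have : (1 : R) <= n%:R by rewrite ler1n.
nra.
Qed.

Lemma ncolors_le (eps : R) (n : nat) :
  0 <= eps <= 1 -> (ncolors eps n)%:R <= 2 * n%:R :> R.
Proof.
move=> /andP [eps0 eps1]; have n0 : (0 : R) <= n%:R by [].
by apply: (@le_trans _ _ ((1 + eps) * n%:R)); rewrite ?truncn_le; nra.
Qed.

Lemma kpar_lower (n : nat) : (8 <= n)%N -> 1 <= ln (n%:R : R) ->
  n%:R <= 2 * (ln (n%:R : R) `^ (49%:R / 100%:R) * (kpar R n)%:R).
Proof.
move=> n8 L1; set L := ln (n%:R : R) in L1 *; set q := L `^ _; set k := kpar R n.
have n8R : (8 : R) <= n%:R by rewrite (ler_nat R 8).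
have r0 : (0 : R) <= 49%:R / 100%:R by rewrite divr_ge0.
have q1 : 1 <= q.
  by have := ge0_ler_powR r0 (x := 1) (y := L); rewrite powR1; apply; rewrite ?nnegrE //; lra.
have qL : q <= L by rewrite ler1_powR // ler_pdivrMr ?ltr0n // mul1r ler_nat.
have Ln : L <= n%:R / 2 by apply: ln_le_half.
have : n%:R / q < k.+1%:R by apply: truncnS_gt.
rewrite ltr_pdivrMr -?natr1; last lra.
nra.
Qed.

Lemma union_bound_le_expRN (alpha eps p : R) (n : nat) :
  0 < alpha -> 0 < eps -> eps < 1 -> ln (n%:R : R) / n%:R <= p ->
  (8 <= n)%N -> 1 <= ln (n%:R : R) -> 40 / alpha <= ln (n%:R : R) `^ (1 / 50) ->
  (2 ^ (n + n + ncolors eps n))%:R *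
    expR (- (p * alpha * n%:R / (ncolors eps n)%:R)) ^+ (kpar R n * kpar R n)
  <= expR (- n%:R).
Proof.
move=> alpha0 eps0 eps1 pL n8 L1 Lalpha.
set L := ln (n%:R : R) in pL L1 Lalpha *; set c := ncolors eps n; set k := kpar R n.
have n_pos : (0 : R) < n%:R by rewrite ltr0n (leq_trans _ n8).
have c_pos : (0 : R) < c%:R by rewrite ltr0n ncolors_gt0 // (leq_trans _ n8).
have c_le : c%:R <= 2 * n%:R :> R by apply: ncolors_le; rewrite !ltW.
have L_split : L = L `^ (49%:R / 100%:R) * L `^ (49%:R / 100%:R) * L `^ (1 / 50).
  have L0 : L != 0 by rewrite gt_eqF //; lra.
  rewrite -!powRD ?L0 ?implybT //.
  by rewrite -[X in L `^ X](_ : 1 = _) ?powRr1 //; [lra | field].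
have alpha_r : 40 <= alpha * L `^ (1 / 50) by rewrite mulrC -ler_pdivrMr.
have Lpn : L <= p * n%:R by rewrite -ler_pdivrMr.
have := union_bound_exponent_ge alpha0 n_pos c_pos c_le L_split alpha_r
  (kpar_lower n8 L1) Lpn.
rewrite -natrM => exponent; rewrite -expRM_natl.
apply: le_trans (ler_pM _ _ (exp2_le_expR _) (lexx _)) _; rewrite ?ler0n ?expR_ge0 //.
by rewrite -expRD ler_expR !natrD; lra.
Qed.

Lemma twice_ln_div_le1 (n : nat) : (8 <= n)%N -> 2 * ln (n%:R : R) / n%:R <= 1.
Proof.
move=> n8; have n8R : (8 : R) <= n%:R by rewrite (ler_nat R 8).
rewrite ler_pdivrMr ?mul1r; last lra.
by have := ln_le_half n8R; lra.
Qed.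

Lemma near_ln_ge (T : R) : \forall n \near \oo, T <= ln (n%:R : R).
Proof.
apply: filterS (nbhs_infty_ger (expR T)) => n Tn.
by rewrite -ler_expR lnK // posrE (lt_le_trans (expR_gt0 T)).
Qed.

Lemma near_powR_ln_ge (T r : R) : 0 < r -> \forall n \near \oo, T <= ln (n%:R : R) `^ r.
Proof.
move=> r0; set S := Num.max T 0.
apply: filterS (near_ln_ge (S `^ r^-1)) => n Sn.
apply: (@le_trans _ _ S); first by rewrite le_max lexx.
have S0 : 0 <= S by rewrite le_max lexx orbT.
rewrite -[X in X <= _](_ : (S `^ r^-1) `^ r = S); last first.
  by rewrite -powRrM mulVf ?gt_eqF // powRr1.
apply: ge0_ler_powR => //; rewrite ?nnegrE ?powR_ge0 //; first exact: ltW.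
exact: le_trans (powR_ge0 _ _) Sn.
Qed.

Lemma near_expRN_le (d : R) : 0 < d -> \forall n \near \oo, expR (- (n%:R : R)) <= d.
Proof.
move=> d0; near=> n.
have dn : d^-1 <= n%:R by near: n; exact: nbhs_infty_ger.
have n0 : (0 : R) < n%:R by apply: lt_le_trans dn; rewrite invr_gt0.
rewrite expRN -[d]invrK lef_pV2 ?posrE ?invr_gt0 ?expR_gt0 //.
by apply: le_trans dn _; have := expR_ge1Dx (n%:R : R); lra.
Unshelve. all: end_near.
Qed.
End Asymptotics.

Theorem lemma12 (R : realType) (alpha eps : R) (p : nat -> R) :
  0 < alpha -> alpha < eps -> eps < 1 ->
  (forall n : nat, ln (n%:R : R) / n%:R <= p n <= 2 * ln (n%:R : R) / n%:R) ->
  (fun n : nat =>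
     prob_Gc (p n) (@lemma12_prop R alpha n (ncolors eps n) (kpar R n)))
    @ \oo --> (1 : R).
Proof.
move=> alpha0 alpha_eps eps1 p_bounds; have eps0 := lt_trans alpha0 alpha_eps.
apply/cvgrPdist_le => d d0; near=> n.
have n8 : (8 <= n)%N by near: n; exact: nbhs_infty_ge.
have L1 : 1 <= ln (n%:R : R) by near: n; exact: near_ln_ge.
have Lalpha : 40 / alpha <= ln (n%:R : R) `^ (1 / 50).
  by near: n; apply: near_powR_ln_ge; rewrite divr_gt0.
have /andP [pL pU] := p_bounds n.
have p01 : 0 <= p n <= 1.
  rewrite (le_trans pU (@twice_ln_div_le1 R n n8)) andbT (le_trans _ pL) //.
  by rewrite divr_ge0 // (le_trans ler01 L1).
have c0 : (0 < ncolors eps n)%N by rewrite ncolors_gt0 // (leq_trans _ n8).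
rewrite prob_GcC // opprB addrC subrK.
rewrite ger0_norm; last by apply: sumr_ge0 => G _; exact: Gnp_weight_ge0.
apply: le_trans (prob_not_lemma12_prop_le n c0 _ p01 (ltW alpha0)) _.
apply: le_trans (union_bound_le_expRN alpha0 eps0 eps1 pL n8 L1 Lalpha) _.
by near: n; exact: near_expRN_le.
Unshelve. all: end_near.
Qed.
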